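(* For every integer $k \ge 1$ and all $\alpha > 0$ and $\lambda > 0$, there exists $\tau > 0$ such that the following holds. Let $V_1,\dots,V_k$ be finite sets and let $d$ be an integer with $2 \le d \le \min\{|V_1|,\dots,|V_k|\}$. Suppose that $\mathcal{H} \subseteq V_1 \times \dots \times V_k$ satisfies $|\mathcal{H}| \le \tau \prod_{i=1}^k |V_i|$, and let $W_1,\dots,W_k$ be independent uniformly chosen random $d$-element subsets of $V_1,\dots,V_k$, respectively. Then \[ \Pr\left(|\mathcal{H} \cap (W_1 \times \dots \times W_k)| > \lambda d^k\right) \le \alpha^d. \] *)

From HB Require Import structures.
From mathcomp Require Import all_boot all_order all_algebra.
From mathcomp Require Import reals.
Set Implicit Arguments. Unset Strict Implicit. Unset Printing Implicit Defensive.
Import Order.TTheory GRing.Theory Num.Theory.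
Local Open Scope ring_scope.

(* The finite sets V_1, ..., V_k are modelled as subsets V i of a common
   finite type T; elements of V_1 x ... x V_k are functions x : 'I_k -> T
   with x i \in V i. *)

(* The sample space of the random experiment: families (W_1,...,W_k) with
   W_i a d-element subset of V_i. Independent uniform choice of the W_i is
   the uniform distribution on this finite set. *)
Definition dsubfamilies (T : finType) (k : nat) (V : 'I_k -> {set T}) (d : nat)
  : {set {ffun 'I_k -> {set T}}} :=
  [set W : {ffun 'I_k -> {set T}} | [forall i, (W i \subset V i) && (#|W i| == d)]].

Definition box_inter (T : finType) (k : nat) (H : {set {ffun 'I_k -> T}})
  (W : {ffun 'I_k -> {set T}}) : {set {ffun 'I_k -> T}} :=
  [set x in H | [forall i, x i \in W i]].

Definition unif_prob (R : realType) (S : finType) (Omega : {set S}) (E : pred S) : R :=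
  #|[set w in Omega | E w]|%:R / #|Omega|%:R.

From HB Require Import structures.
From mathcomp Require Import all_boot all_order all_algebra.
From mathcomp Require Import reals zify ring lra.
Import Order.TTheory GRing.Theory Num.Theory.
Set Implicit Arguments. Unset Strict Implicit. Unset Printing Implicit Defensive.

(* Induct on the number of constrained coordinates: the statement is strengthened
   to a set J of coordinates, with H injective on J, so that a box count is at
   most d^|J|.  Pick i0 in J and call v in V_i0 heavy when the fiber of H over v
   exceeds tau' times the product of the other |V_i|, tau' being the threshold
   for |J| - 1 coordinates.  With tau = tau' gam^q, Markov leaves at most
   gam^q |V_i0| heavy vertices, where q > 2/lambda.  Unless W_i0 contains more
   than d/q heavy vertices, or some light v in W_i0 has a fiber box count above
   (lambda/2) d^(|J|-1), the box count is at most
   (d/q) d^(|J|-1) + d (lambda/2) d^(|J|-1) <= lambda d^|J|.  A first-moment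
   count over (d/q + 1)-subsets of heavy vertices bounds the first case by
   (2 gam)^d <= (alpha/2)^d.  A fiber event ignores W_i0, hence is independent
   of v in W_i0; the induction hypothesis for (alpha/4, lambda/2) and a union
   bound over the d vertices of W_i0 bound the second case by
   d (alpha/4)^d <= (alpha/2)^d. *)

Lemma card_setId_sum (Z : finType) (A : {set Z}) (Q : pred Z) :
  #|[set z in A | Q z]| = \sum_(z in A) Q z.
Proof.
rewrite -sum1_card big_mkcond [RHS]big_mkcond /=.
by apply: eq_bigr => z _; rewrite inE; case: (z \in A); case: (Q z).
Qed.

Lemma card_exists_le_sum (Y Z : finType) (X : {set Y}) (A : {set Z}) (P : Y -> pred Z) :
  #|[set z in A | [exists y in X, P y z]]| <= \sum_(y in X) #|[set z in A | P y z]|.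
Proof.
rewrite card_setId_sum (eq_bigr _ (fun y _ => card_setId_sum A (P y))) exchange_big.
apply: leq_sum => z _; case: existsP => [[y /andP[yX Pyz]]|] //.
by rewrite (bigD1 y) //= Pyz.
Qed.

Lemma sum_card_fibers (X Y : finType) (f : X -> Y) (A : {set X}) (P : pred Y) :
  \sum_(y | P y) #|[set x in A | f x == y]| = #|[set x in A | P (f x)]|.
Proof.
rewrite -sum1_card (partition_big f P) /=; last by move=> x; rewrite inE => /andP[].
apply: eq_bigr => y Py; rewrite -sum1_card; apply: eq_bigl => x.
by rewrite !inE; case: eqP => [->|]; rewrite ?Py ?andbT ?andbF.
Qed.

Lemma card_draws_supset (T : finType) (U S : {set T}) d :
  S \subset U -> #|S| <= d ->
  #|[set B : {set T} | [&& B \subset U, #|B| == d & S \subset B]]| =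
  'C(#|U :\: S|, d - #|S|).
Proof.
move=> SU Sd; rewrite -cards_draws.
pose Bs := [set B : {set T} | [&& B \subset U, #|B| == d & S \subset B]].
have setDSK : {in Bs, cancel (fun B => B :\: S) (fun C => C :|: S)}.
  move=> B; rewrite inE => /and3P[_ _ SB].
  by rewrite setUC setDE setUIr setUCr setIT; apply/setUidPr.
rewrite -(card_in_imset (can_in_inj setDSK)); apply: eq_card => C; rewrite inE.
apply/imsetP/andP => [[B] |[CUS /eqP Cd]].
  rewrite inE => /and3P[BU /eqP Bd SB] ->.
  by rewrite setSD //= cardsDS // Bd.
move: CUS; rewrite subsetD => /andP[CU CS].
exists (C :|: S); last by rewrite setDUl setDv setU0; apply/esym/setDidPl.
rewrite inE subUset CU SU subsetUr !andbT /=.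
move: CS; rewrite -setI_eq0 => /eqP CS0.
by rewrite cardsU CS0 cards0 subn0 Cd subnK.
Qed.

Lemma bin_mul_bin n d m : m <= d <= n ->
  'C(n, d) * 'C(d, m) = 'C(n, m) * 'C(n - m, d - m).
Proof.
case/andP=> md dn; have mn := leq_trans md dn.
have fact_gt0 : 0 < m`! * (d - m)`! * (n - d)`! by rewrite !muln_gt0 !fact_gt0.
apply/eqP; rewrite -(eqn_pmul2r fact_gt0); apply/eqP.
have dmnm : d - m <= n - m by lia.
have := bin_fact dmnm; rewrite (_ : n - m - (d - m) = n - d); last by lia.
move: (bin_fact dn) (bin_fact md) (bin_fact mn) => Cnd Cdm Cnm Cnmdm.
transitivity n`!; first by rewrite -Cnd -Cdm; ring.
by rewrite -Cnm -Cnmdm; ring.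
Qed.

Lemma ffact_mul_exp_le a n m : a <= n -> a ^_ m * n ^ m <= a ^ m * n ^_ m.
Proof.
move=> an; elim: m => [|m IHm]; first by rewrite !ffactn0.
rewrite !ffactnSr !expnSr.
have step : (a - m) * n <= a * (n - m) by nia.
by move: (leq_mul IHm step); rewrite -!mulnA (mulnCA (a - m)) (mulnCA a).
Qed.

Lemma bin_mul_exp_le a n m : a <= n -> 'C(a, m) * n ^ m <= a ^ m * 'C(n, m).
Proof.
move=> an; rewrite -(leq_pmul2r (fact_gt0 m)).
by rewrite mulnAC bin_ffact -mulnA bin_ffact ffact_mul_exp_le.
Qed.

Lemma bin_le_exp2 d m : 'C(d, m) <= 2 ^ d.
Proof.
rewrite -(card_ord d) -cardsT -cards_draws -card_powerset.
by apply: subset_leq_card; apply/subsetP => A; rewrite !inE => /andP[].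
Qed.

(* The expected number of m-subsets of a fixed a-set lying in a uniform d-subset
   of an n-set is at most (a/n)^m 2^d. *)
Lemma leq_bin_hypergeom a n d m : a <= n -> m <= d <= n ->
  'C(a, m) * 'C(n - m, d - m) * n ^ m <= a ^ m * 2 ^ d * 'C(n, d).
Proof.
move=> an /andP[md dn].
have Cnm_gt0 : 0 < 'C(n, m) by rewrite bin_gt0 (leq_trans md).
rewrite -(leq_pmul2r Cnm_gt0).
have -> : 'C(a, m) * 'C(n - m, d - m) * n ^ m * 'C(n, m)
        = 'C(a, m) * n ^ m * 'C(n, d) * 'C(d, m).
  transitivity ('C(a, m) * n ^ m * ('C(n, m) * 'C(n - m, d - m))); first by ring.
  by rewrite -bin_mul_bin ?md //; ring.
have := leq_mul (leq_mul (bin_mul_exp_le m an) (leqnn 'C(n, d))) (bin_le_exp2 d m).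
by move/leq_trans; apply; apply: eq_leq; ring.
Qed.

Section DSubfamilies.
Variables (T : finType) (k : nat) (V : 'I_k -> {set T}) (d : nat).
Local Notation Om := (dsubfamilies V d).

Definition dsubsets i := [set B : {set T} | (B \subset V i) && (#|B| == d)].

Definition set_coord (W : {ffun 'I_k -> {set T}}) i0 B : {ffun 'I_k -> {set T}} :=
  [ffun i => if i == i0 then B else W i].

Definition coord_free i0 (E : pred {ffun 'I_k -> {set T}}) :=
  forall W B, E (set_coord W i0 B) = E W.

Lemma dsubfamiliesP (W : {ffun 'I_k -> {set T}}) :
  reflect (forall i, W i \in dsubsets i) (W \in Om).
Proof. by rewrite inE; apply: (iffP forallP) => h i; have := h i; rewrite inE. Qed.

Lemma card_dsubsets i : #|dsubsets i| = 'C(#|V i|, d).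
Proof. by rewrite -cards_draws; apply: eq_card => B; rewrite !inE. Qed.

Lemma card_dsubfamilies_setId_le (P : pred {ffun 'I_k -> {set T}}) :
  #|[set W in Om | P W]| <= #|Om|.
Proof. by rewrite setIdE subset_leq_card ?subsetIl. Qed.

Section CoordFree.
Variables (i0 : 'I_k) (E : pred {ffun 'I_k -> {set T}}).
Hypothesis E_free : coord_free i0 E.

Lemma card_coord_fiber_le B B' : B' \in dsubsets i0 ->
  #|[set W in Om | E W && (W i0 == B)]| <= #|[set W in Om | E W && (W i0 == B')]|.
Proof.
move=> B'D; pose f W := set_coord W i0 B'.
have f_inj : {in [set W in Om | E W && (W i0 == B)] &, injective f}.
  move=> W1 W2; rewrite !inE => /and3P[_ _ /eqP W1B] /and3P[_ _ /eqP W2B] /ffunP eqf.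
  apply/ffunP => i; move: (eqf i); rewrite !ffunE.
  by case: eqP => [->|//]; rewrite W1B W2B.
rewrite -(card_in_imset f_inj); apply/subset_leq_card/subsetP => W'.
case/imsetP=> W; rewrite inE => /and3P[/dsubfamiliesP WOm EW _] ->.
rewrite inE E_free EW ffunE eqxx; apply/and3P; split => //; apply/dsubfamiliesP => i.
by rewrite ffunE; case: eqP => [->|_]; [exact: B'D|exact: WOm].
Qed.

Lemma card_coord_split B0 (Pb : pred {set T}) : B0 \in dsubsets i0 ->
  #|[set W in Om | E W && Pb (W i0)]| =
  #|[set W in Om | E W && (W i0 == B0)]| * #|[set B in dsubsets i0 | Pb B]|.
Proof.
move=> B0D; rewrite mulnC -sum_nat_const.
have -> : [set W in Om | E W && Pb (W i0)] =
          [set W in [set W in Om | E W] | (W i0 \in dsubsets i0) && Pb (W i0)].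
  by apply/setP => W; rewrite !inE -andbA; apply: andb_id2l => /forallP/(_ i0) ->.
pose DPb B := (B \in dsubsets i0) && Pb B.
rewrite -(sum_card_fibers (fun W : {ffun _} => W i0) _ DPb) [RHS](eq_bigl DPb); last first.
  by move=> B; rewrite inE.
apply: eq_bigr => B /andP[BD _].
have -> : [set W in [set W in Om | E W] | W i0 == B] = [set W in Om | E W && (W i0 == B)].
  by apply/setP => W; rewrite !inE andbA.
by apply/eqP; rewrite eqn_leq !card_coord_fiber_le.
Qed.

Lemma card_coord_indep (Pb : pred {set T}) :
  #|[set W in Om | E W && Pb (W i0)]| * #|dsubsets i0| =
  #|[set W in Om | E W]| * #|[set B in dsubsets i0 | Pb B]|.
Proof.
case: (set_0Vmem (dsubsets i0)) => [-> | [B0 B0D]].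
  rewrite cards0 muln0 (_ : [set B in set0 | Pb B] = set0) ?cards0 ?muln0 //.
  by apply/setP => B; rewrite !inE.
have [-> ->] : [set W in Om | E W] = [set W in Om | E W && predT (W i0)] /\
               #|dsubsets i0| = #|[set B in dsubsets i0 | predT B]|.
  by split; [apply/setP => W; rewrite !inE andbT | apply: eq_card => B; rewrite !inE andbT].
by rewrite !(card_coord_split _ B0D); ring.
Qed.

End CoordFree.

Lemma coord_free_predT i0 : coord_free i0 predT.
Proof. by []. Qed.

Lemma card_coord_supset i0 (S : {set T}) : S \subset V i0 -> #|S| <= d ->
  #|[set W in Om | S \subset W i0]| * 'C(#|V i0|, d) =
  #|Om| * 'C(#|V i0 :\: S|, d - #|S|).
Proof.
move=> SV Sd; have := card_coord_indep (coord_free_predT i0) (fun B => S \subset B).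
have -> : [set W in Om | predT W && (S \subset W i0)] = [set W in Om | S \subset W i0].
  by apply/setP => W; rewrite !inE.
have -> : [set W in Om | predT W] = Om by apply/setP => W; rewrite !inE /= andbT.
have -> : [set B in dsubsets i0 | S \subset B] =
          [set B : {set T} | [&& B \subset V i0, #|B| == d & S \subset B]].
  by apply/setP => B; rewrite !inE andbA.
by rewrite card_dsubsets card_draws_supset.
Qed.

Lemma card_coord_mem_indep i0 v E : coord_free i0 E ->
  #|[set W in Om | E W && (v \in W i0)]| * #|Om| =
  #|[set W in Om | v \in W i0]| * #|[set W in Om | E W]|.
Proof.
move=> E_free; case: (set_0Vmem (dsubsets i0)) => [D0 | [B0 B0D]].
  have Om0 : #|Om| = 0.
    apply/eqP; rewrite cards_eq0; apply/eqP/setP => W; rewrite in_set0.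
    by apply/negbTE/negP => /dsubfamiliesP/(_ i0); rewrite D0 inE.
  have := card_dsubfamilies_setId_le (fun W => v \in W i0).
  by rewrite Om0 leqn0 => /eqP ->; rewrite muln0.
have [-> -> ->] :
    [/\ #|Om| = #|[set W in Om | predT W && predT (W i0)]|,
         #|[set W in Om | v \in W i0]| = #|[set W in Om | predT W && (v \in W i0)]|
       & #|[set W in Om | E W]| = #|[set W in Om | E W && predT (W i0)]|].
  by split; apply: eq_card => W; rewrite !inE ?andbT.
pose mem_v (B : {set T}) := v \in B.
rewrite !(card_coord_split E_free mem_v B0D) !(card_coord_split E_free predT B0D).
rewrite !(card_coord_split (coord_free_predT i0) mem_v B0D).
rewrite !(card_coord_split (coord_free_predT i0) predT B0D).
by ring.
Qed.

Lemma sum_card_coord_mem i0 (X : {set T}) :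
  \sum_(v in X) #|[set W in Om | v \in W i0]| <= d * #|Om|.
Proof.
rewrite (eq_bigr _ (fun v _ => card_setId_sum Om (fun W => v \in W i0))) exchange_big /=.
rewrite mulnC -sum_nat_const; apply: leq_sum => W /dsubfamiliesP/(_ i0).
rewrite inE -(card_setId_sum X (fun v => v \in W i0)) => /andP[_ /eqP <-].
by apply/subset_leq_card/subsetP => v; rewrite inE => /andP[].
Qed.

Lemma card_many_hits_bin i0 (L : {set T}) m : L \subset V i0 -> m <= d ->
  #|[set W in Om | m <= #|W i0 :&: L|]| * 'C(#|V i0|, d) <=
  'C(#|L|, m) * #|Om| * 'C(#|V i0| - m, d - m).
Proof.
move=> LV md; pose Sm := [set S : {set T} | S \subset L & #|S| == m].
have hit_sub : #|[set W in Om | m <= #|W i0 :&: L|]| <=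
               #|[set W in Om | [exists S in Sm, S \subset W i0]]|.
  apply/subset_leq_card/subsetP => W; rewrite !inE => /andP[-> mWL] /=.
  have : 0 < #|[set S : {set T} | S \subset W i0 :&: L & #|S| == m]|.
    by rewrite cards_draws bin_gt0.
  case/card_gt0P => S; rewrite !inE subsetI => /andP[/andP[SW SL] Sm'].
  by apply/existsP; exists S; rewrite !inE SL Sm' SW.
apply: leq_trans (leq_mul (leq_trans hit_sub (card_exists_le_sum _ _ _)) (leqnn _)) _.
rewrite big_distrl /= (eq_bigr (fun _ => #|Om| * 'C(#|V i0| - m, d - m))); last first.
  move=> S; rewrite inE => /andP[SL /eqP Sm'].
  have SV := subset_trans SL LV.
  by rewrite -Sm' card_coord_supset ?(cardsDS SV) ?Sm'.
by rewrite sum_nat_const cards_draws mulnA.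
Qed.

Lemma card_many_hits i0 (L : {set T}) m : L \subset V i0 -> d <= #|V i0| ->
  #|[set W in Om | m <= #|W i0 :&: L|]| * #|V i0| ^ m <= #|L| ^ m * 2 ^ d * #|Om|.
Proof.
move=> LV dV; have [md | dm] := leqP m d; last first.
  rewrite (_ : [set W in Om | _] = set0) ?cards0 //; apply/setP => W.
  rewrite in_set0; apply/negbTE/negP; rewrite inE => /andP[/dsubfamiliesP/(_ i0)].
  rewrite inE => /andP[_ /eqP Wd]; apply/negP; rewrite -ltnNge.
  by rewrite (leq_ltn_trans _ dm) // -Wd subset_leq_card ?subsetIl.
have Cnd_gt0 : 0 < 'C(#|V i0|, d) by rewrite bin_gt0.
rewrite -(leq_pmul2r Cnd_gt0) mulnAC.
apply: leq_trans (leq_mul (card_many_hits_bin LV md) (leqnn _)) _.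
have hyp := leq_bin_hypergeom (subset_leq_card LV) (introT andP (conj md dV)).
apply: leq_trans (leq_trans _ (leq_mul (leqnn #|Om|) hyp)) _; apply: eq_leq; ring.
Qed.

End DSubfamilies.

Local Open Scope ring_scope.

Section Boxes.
Variables (T : finType) (k : nat).
Implicit Types (H : {set {ffun 'I_k -> T}}) (J : {set 'I_k}) (W : {ffun 'I_k -> {set T}}).

Definition box_on J H W := [set x in H | [forall i in J, x i \in W i]].

Definition injective_on_coords J H :=
  forall x y, x \in H -> y \in H -> (forall i, i \in J -> x i = y i) -> x = y.

Definition coord_fiber H i0 v := [set x in H | x i0 == v].

Lemma box_on_setT H W : box_on [set: 'I_k] H W = box_inter H W.
Proof.
apply/setP => x; rewrite !inE; congr (_ && _).
by apply: eq_forallb => i; rewrite inE.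
Qed.

Lemma injective_on_coords_setT H : injective_on_coords [set: 'I_k] H.
Proof. by move=> x y _ _ eqxy; apply/ffunP => i; apply: eqxy; rewrite inE. Qed.

Lemma injective_on_coords_fiber J H i0 v : injective_on_coords J H ->
  injective_on_coords (J :\ i0) (coord_fiber H i0 v).
Proof.
move=> H_inj x y; rewrite !inE => /andP[xH /eqP xv] /andP[yH /eqP yv] eqxy.
apply: H_inj => // i iJ; have [->|ne] := eqVneq i i0; first by rewrite xv yv.
by apply: eqxy; rewrite !inE ne iJ.
Qed.

Lemma box_on_set_coord J H W i0 B : i0 \notin J ->
  box_on J H (set_coord W i0 B) = box_on J H W.
Proof.
move=> i0J; apply/setP => x; rewrite !inE; congr (_ && _).
apply: eq_forallb => i; rewrite ffunE.
by case: eqP => [->|//]; rewrite (negbTE i0J).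
Qed.

Lemma card_box_on_fibers J H W i0 : i0 \in J ->
  (#|box_on J H W| = \sum_(v in W i0) #|box_on (J :\ i0) (coord_fiber H i0 v) W|)%N.
Proof.
move=> i0J.
have := sum_card_fibers (fun x : {ffun 'I_k -> T} => x i0) (box_on J H W) (mem (W i0)).
have -> : [set x in box_on J H W | x i0 \in W i0] = box_on J H W.
  apply/setP => x; rewrite !inE; apply: andb_idr => /andP[_ /forallP/(_ i0)].
  by rewrite i0J.
move=> <-; apply: eq_bigr => v vW; apply: eq_card => x; rewrite !inE.
have [xv|] := eqVneq (x i0) v; rewrite ?andbF ?andbT //=; congr (_ && _).
apply/forallP/forallP => h i.
  by apply/implyP; rewrite !inE => /andP[_ iJ]; exact: (implyP (h i) iJ).
apply/implyP => iJ; have [->|ne] := eqVneq i i0; first by rewrite xv.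
by move: (h i); rewrite !inE ne iJ.
Qed.

Lemma card_box_on_le J H W d : (forall i, #|W i| = d) -> injective_on_coords J H ->
  (#|box_on J H W| <= d ^ #|J|)%N.
Proof.
move=> Wd; move Jn: #|J| => n; elim: n J H Jn => [|n IHn] J H Jn H_inj.
  have J0 := cards0_eq Jn; apply/card_le1_eqP => x y.
  rewrite !inE => /andP[xH _] /andP[yH _].
  by apply: H_inj => // i; rewrite J0 inE.
have [i0 i0J] : exists i0, i0 \in J by apply/card_gt0P; rewrite Jn.
rewrite (card_box_on_fibers _ _ i0J) expnS -{1}(Wd i0) -sum_nat_const.
apply: leq_sum => v _; apply: IHn; last exact: injective_on_coords_fiber.
by move: Jn; rewrite (cardsD1 i0) i0J => -[].
Qed.

End Boxes.

Lemma card_heavy_fibers_le (R : numDomainType) (T : finType) k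
    (H : {set {ffun 'I_k -> T}}) i0 (X : {set T}) (c : R) :
  #|[set v in X | c < #|coord_fiber H i0 v|%:R]|%:R * c <= #|H|%:R.
Proof.
set L := [set v in X | _]; rewrite mulr_natl -sumr_const.
apply: (@le_trans _ _ (\sum_(v in L) #|coord_fiber H i0 v|%:R)).
  by apply: ler_sum => v; rewrite inE => /andP[_ /ltW].
rewrite -natr_sum ler_nat (sum_card_fibers (fun x : {ffun _} => x i0) H (mem L)).
by rewrite setIdE subset_leq_card ?subsetIl.
Qed.

Lemma card_heavy_fibers_prod_le (R : numFieldType) (T : finType) k (V : 'I_k -> {set T})
    (J : {set 'I_k}) (H : {set {ffun 'I_k -> T}}) i0 (tau rho : R) :
  i0 \in J -> 0 < tau -> (forall i, 0 < #|V i|)%N ->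
  #|H|%:R <= tau * rho * \prod_(i in J) (#|V i|%:R : R) ->
  #|[set v in V i0 | tau * \prod_(i in J :\ i0) (#|V i|%:R : R) < #|coord_fiber H i0 v|%:R]|%:R
    <= rho * #|V i0|%:R.
Proof.
move=> i0J tau_gt0 V_gt0; set P' := \prod_(i in J :\ i0) _.
have P'_gt0 : 0 < P' by apply: prodr_gt0 => i _; rewrite ltr0n.
rewrite (bigD1 i0) //= (eq_bigl (mem (J :\ i0))) -/P'; last first.
  by move=> i; rewrite !inE andbC.
move=> H_le; rewrite -(ler_pM2r (mulr_gt0 tau_gt0 P'_gt0)).
apply: le_trans (card_heavy_fibers_le H i0 (V i0) (tau * P')) (le_trans H_le _).
by rewrite (_ : tau * rho * _ = rho * #|V i0|%:R * (tau * P')) //; ring.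
Qed.

Lemma card_box_on_split (R : realFieldType) (T : finType) k (J : {set 'I_k})
    (H : {set {ffun 'I_k -> T}}) (W : {ffun 'I_k -> {set T}}) i0 (L : {set T}) d (b : R) :
  i0 \in J -> injective_on_coords J H -> (forall i, #|W i| = d) -> 0 <= b ->
  (forall v, v \in W i0 -> v \notin L ->
     #|box_on (J :\ i0) (coord_fiber H i0 v) W|%:R <= b) ->
  #|box_on J H W|%:R <= #|W i0 :&: L|%:R * d%:R ^+ #|J :\ i0| + d%:R * b.
Proof.
move=> i0J H_inj Wd b_ge0 light_le.
have fiber_le v : v \in W i0 -> #|box_on (J :\ i0) (coord_fiber H i0 v) W|%:R <=
    (v \in L)%:R * d%:R ^+ #|J :\ i0| + b.
  move=> vW; case: (boolP (v \in L)) => vL; last by rewrite mul0r add0r light_le.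
  rewrite mul1r -natrX ler_wpDr // ler_nat card_box_on_le //.
  exact: injective_on_coords_fiber.
rewrite (card_box_on_fibers _ _ i0J) natr_sum; apply: le_trans (ler_sum _ fiber_le) _.
rewrite big_split /= -mulr_suml sumr_const Wd -[b *+ d]mulr_natl -natr_sum -card_setId_sum.
by rewrite (_ : [set z in W i0 | z \in L] = W i0 :&: L) //; apply/setP => z; rewrite !inE.
Qed.

Lemma card_box_on_le_few_hits (R : realFieldType) (T : finType) k (J : {set 'I_k})
    (H : {set {ffun 'I_k -> T}}) (W : {ffun 'I_k -> {set T}}) i0 (L : {set T}) d q
    (lambda : R) :
  i0 \in J -> injective_on_coords J H -> (forall i, #|W i| = d) ->
  0 < lambda -> 2 < lambda * q%:R -> (#|W i0 :&: L| <= d %/ q)%N ->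
  (forall v, v \in W i0 -> v \notin L ->
     #|box_on (J :\ i0) (coord_fiber H i0 v) W|%:R <= lambda / 2 * d%:R ^+ #|J :\ i0|) ->
  #|box_on J H W|%:R <= lambda * d%:R ^+ #|J :\ i0|.+1.
Proof.
move=> i0J H_inj Wd lambda_gt0 lambda_q hits light_le.
have dpow_ge0 : 0 <= d%:R ^+ #|J :\ i0| :> R by rewrite exprn_ge0 ?ler0n.
apply: le_trans (card_box_on_split i0J H_inj Wd _ light_le) _.
  by apply: mulr_ge0 => //; rewrite divr_ge0 ?ltW.
have hits_le : #|W i0 :&: L|%:R <= lambda / 2 * d%:R :> R.
  move: hits; rewrite -(ler_nat R) => hits.
  have q_div : (d %/ q)%:R * q%:R <= d%:R :> R by rewrite -natrM ler_nat leq_divM.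
  have := ler0n R (d %/ q); nra.
rewrite exprS; nra.
Qed.

Lemma exprn_half_mul_le (R : realFieldType) (x : R) d c : 0 <= x -> (c <= 2 ^ d)%N ->
  (x / 2) ^+ d * c%:R <= x ^+ d.
Proof.
move=> x_ge0 c_le; rewrite expr_div_n mulrAC ler_pdivrMr ?exprn_gt0 //.
by rewrite ler_wpM2l ?exprn_ge0 // -natrX ler_nat.
Qed.

Lemma card_subsetU_le (R : realFieldType) (S : finType) (E A B : {set S}) (x N : R) d :
  (0 < d)%N -> 0 <= x -> 0 <= N -> E \subset A :|: B ->
  #|A|%:R <= (x / 2) ^+ d * N -> #|B|%:R <= (x / 2) ^+ d * N -> #|E|%:R <= x ^+ d * N.
Proof.
move=> d_gt0 x_ge0 N_ge0 EAB A_le B_le.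
have E_le : #|E|%:R <= (#|A| + #|B|)%:R :> R.
  by rewrite ler_nat (leq_trans (subset_leq_card EAB)) ?leq_card_setU.
apply: le_trans E_le (le_trans _ (_ : (x / 2) ^+ d * 2%:R * N <= _)).
  by rewrite natrD mulr_natr mulr2n mulrDl lerD.
by rewrite ler_wpM2r // exprn_half_mul_le // -{1}(expn1 2) leq_pexp2l.
Qed.

Section Probabilities.
Variables (R : realFieldType) (T : finType) (k : nat) (V : 'I_k -> {set T}) (d : nat).
Local Notation Om := (dsubfamilies V d).

Lemma card_many_hits_le i0 (L : {set T}) (gam : R) q :
  L \subset V i0 -> (0 < d <= #|V i0|)%N -> (0 < q)%N -> 0 <= gam <= 1 ->
  #|L|%:R <= gam ^+ q * #|V i0|%:R ->
  #|[set W in Om | ((d %/ q).+1 <= #|W i0 :&: L|)%N]|%:R <= (2 * gam) ^+ d * #|Om|%:R.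
Proof.
move=> LV /andP[d_gt0 dV] q_gt0 /andP[gam_ge0 gam_le1] L_le.
set m := (d %/ q).+1; set n := #|V i0|.
have n_gt0 : 0 < n%:R :> R by rewrite ltr0n (leq_trans d_gt0).
have L_pow : #|L|%:R ^+ m <= gam ^+ d * n%:R ^+ m.
  apply: le_trans (_ : (gam ^+ q * n%:R) ^+ m <= _).
    by rewrite lerXn2r ?nnegrE ?ler0n // mulr_ge0 ?exprn_ge0 ?ler0n.
  rewrite exprMn -exprM ler_wpM2r ?exprn_ge0 ?ler0n //.
  by rewrite ler_wiXn2l // ltnW // mulnC ltn_ceil.
have := card_many_hits m LV dV; rewrite -(ler_nat R) !natrM !natrX => hits.
rewrite -(ler_pM2r (exprn_gt0 m n_gt0)); apply: le_trans hits _.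
have -> : (2 * gam) ^+ d * #|Om|%:R * n%:R ^+ m =
          gam ^+ d * n%:R ^+ m * 2 ^+ d * #|Om|%:R by rewrite exprMn; ring.
by rewrite !ler_wpM2r ?exprn_ge0 ?ler0n.
Qed.

Lemma card_exists_hit_le i0 (X : {set T}) (E : T -> pred {ffun 'I_k -> {set T}})
    (beta : R) : 0 <= beta -> (forall v, v \in X -> coord_free i0 (E v)) ->
  (forall v, v \in X -> #|[set W in Om | E v W]|%:R <= beta * #|Om|%:R) ->
  #|[set W in Om | [exists v in X, (v \in W i0) && E v W]]|%:R <= d%:R * beta * #|Om|%:R.
Proof.
move=> beta_ge0 E_free E_le; have [Om0|Om_gt0] := posnP #|Om|.
  have := card_dsubfamilies_setId_le V d
    (fun W : {ffun _} => [exists v in X, (v \in W i0) && E v W]).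
  by rewrite Om0 leqn0 => /eqP ->; rewrite mulr0.
have hit_le v : v \in X ->
    #|[set W in Om | (v \in W i0) && E v W]|%:R <= #|[set W in Om | v \in W i0]|%:R * beta.
  move=> vX; rewrite -(ler_pM2r (_ : 0 < #|Om|%:R)) ?ltr0n //.
  have -> : [set W in Om | (v \in W i0) && E v W] = [set W in Om | E v W && (v \in W i0)].
    by apply/setP => W; rewrite !inE; congr (_ && _); exact: andbC.
  rewrite -natrM (card_coord_mem_indep _ _ _ (E_free v vX)) natrM -mulrA.
  by rewrite ler_wpM2l ?ler0n ?E_le.
apply: le_trans (_ : \sum_(v in X) #|[set W in Om | v \in W i0]|%:R * beta <= _).
  apply: le_trans (ler_sum _ hit_le); rewrite -natr_sum ler_nat.
  exact: card_exists_le_sum.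
by rewrite -mulr_suml -natr_sum mulrAC ler_wpM2r // -natrM ler_nat sum_card_coord_mem.
Qed.

End Probabilities.

Section Induction.
Variables (R : archiRealFieldType) (k : nat).

Definition box_tail_bound n (alpha lambda tau : R) :=
  forall (T : finType) (V : 'I_k -> {set T}) d (H : {set {ffun 'I_k -> T}})
         (J : {set 'I_k}),
    #|J| = n -> (0 < d)%N -> (forall i, d <= #|V i|)%N -> injective_on_coords J H ->
    #|H|%:R <= tau * \prod_(i in J) (#|V i|%:R : R) ->
    #|[set W in dsubfamilies V d | lambda * d%:R ^+ n < #|box_on J H W|%:R]|%:R
      <= alpha ^+ d * #|dsubfamilies V d|%:R.

Lemma box_tail_bound0 alpha lambda : 0 <= alpha -> 0 <= lambda ->
  box_tail_bound 0 alpha lambda (1 / 2).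
Proof.
move=> alpha_ge0 lambda_ge0 T V d H J /cards0_eq -> _ _ _.
rewrite big_set0 mulr1 => H_le.
have H0 : H = set0.
  apply/eqP; rewrite -cards_eq0 -leqn0 -ltnS -(ltr_nat R).
  by apply: le_lt_trans H_le _; lra.
have -> : [set W in dsubfamilies V d | lambda * d%:R ^+ 0 < #|box_on set0 H W|%:R] = set0.
  apply/setP => W; rewrite !inE H0 (_ : box_on _ set0 W = set0) ?cards0.
    by rewrite expr0 mulr1 ltNge lambda_ge0 andbF.
  by apply/setP => x; rewrite !inE.
by rewrite cards0 mulr_ge0 ?exprn_ge0 ?ler0n.
Qed.

Lemma box_tail_boundS n alpha lambda tau gam q :
  0 < alpha -> 0 < lambda -> 0 < tau -> 0 <= gam <= 1 -> 2 * gam <= alpha / 2 ->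
  (0 < q)%N -> 2 < lambda * q%:R ->
  box_tail_bound n (alpha / 4) (lambda / 2) tau ->
  box_tail_bound n.+1 alpha lambda (tau * gam ^+ q).
Proof.
move=> alpha_gt0 lambda_gt0 tau_gt0 gam01 gam_half q_gt0 lambda_q IHn.
move=> T V d H J Jn d_gt0 dV H_inj H_le; set Om := dsubfamilies V d.
have [i0 i0J] : exists i0, i0 \in J by apply/card_gt0P; rewrite Jn.
have J'n : #|J :\ i0| = n by move: Jn; rewrite (cardsD1 i0) i0J => -[].
set L := [set v in V i0 |
  tau * \prod_(i in J :\ i0) (#|V i|%:R : R) < #|coord_fiber H i0 v|%:R].
have L_le : #|L|%:R <= gam ^+ q * #|V i0|%:R.
  by apply: card_heavy_fibers_prod_le => // i; apply: leq_trans (dV i).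
set A := [set W in Om | ((d %/ q).+1 <= #|W i0 :&: L|)%N].
pose light v W := lambda / 2 * d%:R ^+ n < #|box_on (J :\ i0) (coord_fiber H i0 v) W|%:R.
set B := [set W in Om | [exists v in V i0 :\: L, (v \in W i0) && light v W]].
have tail_sub : [set W in Om | lambda * d%:R ^+ n.+1 < #|box_on J H W|%:R] \subset A :|: B.
  apply/subsetP => W /setIdP[WOm tail]; rewrite in_setU.
  have WV : W i0 \subset V i0 by move/dsubfamiliesP: WOm => /(_ i0); rewrite inE => /andP[].
  apply: contraTT tail; rewrite negb_or -leNgt => /andP[notA notB].
  rewrite -J'n; apply: (card_box_on_le_few_hits (L := L) (q := q)) => //.
  - by move=> i; move/dsubfamiliesP: WOm => /(_ i); rewrite inE => /andP[_ /eqP].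
  - by move: notA; rewrite inE WOm -leqNgt.
  move=> v vW vL; rewrite leNgt; apply: contra notB => light_v.
  rewrite inE WOm; apply/existsP; exists v.
  by rewrite in_setD vL (subsetP WV) //= vW /light -J'n light_v.
have A_le : #|A|%:R <= (alpha / 2) ^+ d * #|Om|%:R.
  apply: le_trans (card_many_hits_le _ _ q_gt0 gam01 L_le) _.
  - by apply/subsetP => v; rewrite inE => /andP[].
  - by rewrite d_gt0 dV.
  have /andP[gam_ge0 _] := gam01.
  by rewrite ler_wpM2r ?ler0n // lerXn2r ?nnegrE //; lra.
have B_le : #|B|%:R <= (alpha / 2) ^+ d * #|Om|%:R.
  apply: le_trans (card_exists_hit_le (beta := (alpha / 4) ^+ d) _ _ _) _.
  - by rewrite exprn_ge0 //; lra.
  - by move=> v _ W B0; rewrite /light box_on_set_coord // !inE eqxx.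
  - move=> v; rewrite in_setD => /andP[vL vV].
    have fiber_inj := injective_on_coords_fiber (i0 := i0) (v := v) H_inj.
    rewrite /light; apply: (IHn _ _ _ _ _ J'n d_gt0 dV fiber_inj).
    by move: vL; rewrite inE vV /= -leNgt.
  have d_le : (d <= 2 ^ d)%N by apply/ltnW/ltn_expl.
  rewrite ler_wpM2r ?ler0n // mulrC (_ : alpha / 4 = alpha / 2 / 2); last by field.
  by rewrite exprn_half_mul_le //; lra.
by apply: card_subsetU_le tail_sub A_le B_le; rewrite ?ler0n ?ltW.
Qed.

Lemma exists_box_tail_bound n alpha lambda : 0 < alpha -> 0 < lambda ->
  exists2 tau, 0 < tau & box_tail_bound n alpha lambda tau.
Proof.
elim: n alpha lambda => [|n IHn] alpha lambda alpha_gt0 lambda_gt0.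
  by exists (1 / 2); [lra | apply: box_tail_bound0; lra].
have [tau tau_gt0 tail_n] :
    exists2 tau, 0 < tau & box_tail_bound n (alpha / 4) (lambda / 2) tau.
  by apply: IHn; lra.
set gam := Num.min alpha 1 / 4; set q := (Num.truncn (2 / lambda)).+1.
have min_gt0 : 0 < Num.min alpha 1 by rewrite lt_min alpha_gt0 ltr01.
have min_le : Num.min alpha 1 <= alpha by rewrite ge_min lexx.
have min_le1 : Num.min alpha 1 <= 1 by rewrite ge_min lexx orbT.
have lambda_q : 2 < lambda * q%:R by rewrite mulrC -ltr_pdivrMr // truncnS_gt.
exists (tau * gam ^+ q); first by rewrite mulr_gt0 ?exprn_gt0 // /gam; lra.
by apply: (box_tail_boundS (gam := gam) (q := q)) tail_n => //; rewrite /gam; lra.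
Qed.

End Induction.

Theorem lemma3p6 (R : realType) (k : nat) (alpha lambda : R) :
  (1 <= k)%N -> 0 < alpha -> 0 < lambda ->
  exists tau : R, 0 < tau /\
    forall (T : finType) (V : 'I_k -> {set T}) (d : nat)
           (H : {set {ffun 'I_k -> T}}),
      (2 <= d)%N ->
      (forall i, d <= #|V i|)%N ->
      (forall x, x \in H -> forall i, x i \in V i) ->
      #|H|%:R <= tau * \prod_(i < k) (#|V i|%:R : R) ->
      unif_prob R (dsubfamilies V d)
        (fun W => lambda * (d%:R ^+ k) < #|box_inter H W|%:R)
      <= alpha ^+ d.
Proof.
move=> _ alpha_gt0 lambda_gt0.
have [tau tau_gt0 tail] := exists_box_tail_bound k k alpha_gt0 lambda_gt0.
exists tau; split => // T V d H d_ge2 dV _ H_le.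
have Jk : #|[set: 'I_k]| = k by rewrite cardsT card_ord.
have prodT : \prod_(i in [set: 'I_k]) (#|V i|%:R : R) = \prod_(i < k) #|V i|%:R.
  by apply: eq_bigl => i; rewrite inE.
have := tail T V d H [set: 'I_k] Jk (ltnW d_ge2) dV (injective_on_coords_setT (H := H)).
rewrite prodT => /(_ H_le).
under eq_finset => W do rewrite box_on_setT.
rewrite /unif_prob; have [->|Om_gt0] := posnP #|dsubfamilies V d|.
  by rewrite invr0 !mulr0 => _; rewrite exprn_ge0 ?ltW.
by rewrite ler_pdivrMr ?ltr0n.
Qed.
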